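(* Let $M$ be a gasket automaton over $\Sigma=\{1,\dots,N\}$ and let $0<\xi<1$. Then $(\Sigma^\infty,\rho_{M,\xi})$ is a pseudo-quasimetric space; that is, for all $\mathbf x,\mathbf y,\mathbf z\in\Sigma^\infty$: $\rho_{M,\xi}(\mathbf x,\mathbf x)=0$, $\rho_{M,\xi}(\mathbf x,\mathbf y)=\rho_{M,\xi}(\mathbf y,\mathbf x)$, and there is a constant $C\ge 1$ independent of $\mathbf x,\mathbf y,\mathbf z$ with $\rho_{M,\xi}(\mathbf x,\mathbf z)\le C(\rho_{M,\xi}(\mathbf x,\mathbf y)+\rho_{M,\xi}(\mathbf y,\mathbf z))$.
   Context: $\Sigma^\infty$ is the set of infinite words $\mathbf x=x_1x_2\cdots$ over $\Sigma$. A $\Sigma$-automaton $M$ has finite state set $Q=Q_0\cup\{Id,Exit\}$, input alphabet $\Sigma^2$, initial state $Id$, final state $Exit$, and transition function $\delta:Q\times\Sigma^2\to Q$ with $\delta(Id,(i,j))=Id$ iff $i=j$. For $(\mathbf x,\mathbf y)\in\Sigma^\infty\times\Sigma^\infty$ the itinerary is $S_0=Id$, $S_k=\delta(S_{k-1},(x_k,y_k))$, stopped when $Exit$ is reached. The surviving time $T_M(\mathbf x,\mathbf y)\in\{0,1,2,\dots\}\cup\{\infty\}$ is the largest $k$ with $S_k\neq Exit$ ($\infty$ if $Exit$ is never reached), and $\rho_{M,\xi}(\mathbf x,\mathbf y)=\xi^{T_M(\mathbf x,\mathbf y)}$ with $\xi^\infty=0$. Triangle automaton: let $\alpha,\beta,\gamma$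 be three distinct elements of $\Sigma\cup\{-1,-2,-3\}$; $M$ is a $\Sigma$-automaton with $Q=\{S_{uv}:u,v\in\{\alpha,\beta,\gamma\},u\ne v\}\cup\{Id,Exit\}$ such that (i) if $\delta(Id,(i,j))=S_{uv}$ then $\delta(Id,(j,i))=S_{vu}$; (ii) $\delta(S_{uv},(i,j))=S_{uv}$ if $(i,j)=(v,u)$ and $=Exit$ otherwise; also $\delta(Exit,\cdot)=Exit$. Let $\mathcal P_{uv}=\{(i,j)\in\Sigma^2:\delta(Id,(i,j))=S_{uv}\}$ and write $i\triangleleft_{uv}j$ iff $(i,j)\in\mathcal P_{uv}$ (so $i\triangleleft_{uv}j$ iff $j\triangleleft_{vu}i$). A symbol $j$ is $uv$-minimal if there is no $i$ with $i\triangleleft_{uv}j$, $uv$-maximal if there is no $k$ with $j\triangleleft_{uv}k$, and $uv$-isolated if both. Gasket automaton: a triangle automaton such that for all distinct $u,v\in\{\alpha,\beta,\gamma\}$: (Uniqueness) $i\triangleleft_{uv}j$ and $i\triangleleft_{uv}j'$ imply $j=j'$; (Gathering) for $a,b,c\in\Sigma$, any two of $a\triangleleft_{\alpha\gamma}c$, $a\triangleleft_{\beta\gamma}b$, $b\triangleleft_{\alpha\beta}c$ imply the third; (Boundary) if $\alpha\in\Sigma$ then $\alpha$ is $\alpha\gamma$-minimal and $\alpha\beta$-minimal; if $\beta\in\Sigma$ then $\beta$ is $\beta\gamma$-minimal and $\beta\alpha$-minimal; if $\gamma\in\Sigma$ then $\gamma$ is $\gamma\alpha$-minimal and $\gamma\beta$-minimal.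 *)

From mathcomp Require Import all_boot all_order all_algebra.
From mathcomp Require Import boolp.
Set Implicit Arguments. Unset Strict Implicit. Unset Printing Implicit Defensive.
Import Order.TTheory GRing.Theory Num.Theory.
Local Open Scope ring_scope.

(* Alphabet Sigma = {1,...,N} is modelled by 'I_N (relabelling k <-> k-1).
   Labels alpha, beta, gamma live in Sigma ∪ {-1,-2,-3}, modelled by
   'I_N + 'I_3 (inl = a symbol of Sigma, inr = one of the three extra labels). *)
Definition label (N : nat) := ('I_N + 'I_3)%type.

Inductive tstate (L : Type) := TId | TExit | TS of L & L.
Arguments TId {L}. Arguments TExit {L}.

Definition is_exit L (s : tstate L) : bool := if s is TExit then true else false.

Section Auto.
Variable N : nat.
Variable delta : tstate (label N) -> 'I_N -> 'I_N -> tstate (label N).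

Definition in_abc (a b c u : label N) : Prop := u = a \/ u = b \/ u = c.

Definition lhd (u v : label N) (i j : 'I_N) : Prop := delta TId i j = TS u v.

Definition uv_minimal (u v : label N) (j : 'I_N) : Prop := forall i, ~ lhd u v i j.
Definition uv_maximal (u v : label N) (j : 'I_N) : Prop := forall k, ~ lhd u v j k.

Definition triangle_automaton (a b c : label N) : Prop :=
  [/\ a <> b, a <> c & b <> c] /\
   (forall i j, delta TId i j = TId <-> i = j) /\
   (forall i j, delta TId i j = TId \/ delta TId i j = TExit \/
      exists u v, [/\ in_abc a b c u, in_abc a b c v, u <> v & delta TId i j = TS u v]) /\
   (forall i j u v, delta TId i j = TS u v -> delta TId j i = TS v u) /\
   (forall u v, in_abc a b c u -> in_abc a b c v -> u <> v ->
      forall i j, delta (TS u v) i j =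
        (if (inl i == v) && (inl j == u) then TS u v else TExit)) /\
   (forall i j, delta TExit i j = TExit).

Definition boundary_at (u v w : label N) : Prop :=
  match u with inl s => uv_minimal u w s /\ uv_minimal u v s | inr _ => True end.

Definition gasket_automaton (a b c : label N) : Prop :=
  [/\ triangle_automaton a b c,
   (forall u v, in_abc a b c u -> in_abc a b c v -> u <> v ->
      forall i j j', lhd u v i j -> lhd u v i j' -> j = j'),
   (forall x y z : 'I_N,
      [/\ lhd a c x z -> lhd b c x y -> lhd a b y z,
          lhd a c x z -> lhd a b y z -> lhd b c x y &
          lhd b c x y -> lhd a b y z -> lhd a c x z])
   &
   [/\ boundary_at a c b, boundary_at b c a & boundary_at c a b]].

(* Infinite words x = x_1 x_2 ... : x k is the letter x_{k+1}. *)
Fixpoint itin (x y : nat -> 'I_N) (k : nat) : tstate (label N) :=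
  match k with
  | 0 => TId
  | k'.+1 => delta (itin x y k') (x k') (y k')
  end.

(* rho_{M,xi}(x,y) = xi ^ T(x,y), with xi^oo = 0.  Since Exit is absorbing
   and S_0 = Id, the largest k with S_k <> Exit is (first exit time) - 1. *)
Definition rho (R : numDomainType) (xi : R) (x y : nat -> 'I_N) : R :=
  match pselect (exists k, is_exit (itin x y k)) with
  | left h => xi ^+ (ex_minn h).-1
  | right _ => 0
  end.
End Auto.

(* Run the pairs (x,y), (y,z) and (x,z) in parallel.  As long as (x,y) and (y,z)
   survive one more step, the state of (x,z) is the composite of their states: Id is
   neutral, and S_uv followed by S_wu gives S_wv, or Id when w = v.  Gathering and
   Uniqueness make this composition commute with the transitions out of Id, while
   Boundary forbids one pair to leave Id when the other stays in a state S_uv.  Hence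
   T(x,z) >= min (T(x,y), T(y,z)) - 1, so that rho(x,z) <= xi^-1 (rho(x,y) + rho(y,z)). *)

From mathcomp Require Import all_boot all_order all_algebra.
From mathcomp Require Import boolp reals.
Import Order.TTheory GRing.Theory Num.Theory.
Set Implicit Arguments. Unset Strict Implicit.
Local Open Scope ring_scope.

Section Rho.
Variables (N : nat) (delta : tstate (label N) -> 'I_N -> 'I_N -> tstate (label N)).
Variables (R : numDomainType) (xi : R).
Implicit Types x y : nat -> 'I_N.

Lemma eq_rho x y x' y' :
  (forall k, is_exit (itin delta x y k) = is_exit (itin delta x' y' k)) ->
  rho delta xi x y = rho delta xi x' y'.
Proof.
move=> E; rewrite /rho; case: pselect => [h|h]; case: pselect => [h'|h'] //.
- by congr (xi ^+ (_).-1); apply: eq_ex_minn.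
- by case: h' => //; case: h => k hk; exists k; rewrite -E.
- by case: h; case: h' => k hk; exists k; rewrite E.
Qed.

Lemma rho_eq0 x y : (forall k, ~~ is_exit (itin delta x y k)) -> rho delta xi x y = 0.
Proof.
by move=> alive; rewrite /rho; case: pselect => // h; exfalso; case: h => k; apply/negP.
Qed.

Lemma rho_ge0 x y : 0 <= xi -> 0 <= rho delta xi x y.
Proof. by move=> xi_ge0; rewrite /rho; case: pselect => // h; rewrite exprn_ge0. Qed.

Lemma rho_ge_exit x y n : 0 <= xi <= 1 -> is_exit (itin delta x y n) ->
  xi ^+ n.-1 <= rho delta xi x y.
Proof.
move=> /andP[xi_ge0 xi_le1] exit_n; rewrite /rho; case: pselect => [h|[]]; last by exists n.
case: ex_minnP => m _ /(_ n exit_n) le_mn.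
by apply: ler_wiXn2l => //; rewrite -!subn1 leq_sub2r.
Qed.

Lemma rho_le x y r : 0 <= r ->
  (forall n, is_exit (itin delta x y n) -> xi ^+ n.-1 <= r) -> rho delta xi x y <= r.
Proof.
by move=> r_ge0 bound; rewrite /rho; case: pselect => // h; case: ex_minnP => n /bound.
Qed.

End Rho.

Section Itineraries.
Variables (N : nat) (delta : tstate (label N) -> 'I_N -> 'I_N -> tstate (label N)).
Variables a b c : label N.
Hypothesis tri : triangle_automaton delta a b c.
Implicit Types (x y z : nat -> 'I_N) (s : tstate (label N)).

Definition side (u v : label N) := [/\ in_abc a b c u, in_abc a b c v & u <> v].

Definition wf_state s := if s is TS u v then side u v else True.

Definition swap_state s := if s is TS u v then TS v u else s.

(* The second label of the right state is ignored: along surviving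
   itineraries it equals the first label of the left state. *)
Definition compose_state s1 s2 :=
  match s1, s2 with
  | TId, s | s, TId => s
  | TS u v, TS w _ => if w == v then TId else TS w v
  | _, _ => TExit
  end.

Lemma compose_state_exit s1 s2 :
  is_exit (compose_state s1 s2) -> is_exit s1 || is_exit s2.
Proof. by case: s1 => [| |u v]; case: s2 => [| |w t] //=; case: eqP. Qed.

Let delta_IdP i j : delta TId i j = TId <-> i = j.
Proof. by case: tri => _ []. Qed.

Let delta_Id_cases i j : [\/ delta TId i j = TId, delta TId i j = TExit |
  exists u v, side u v /\ lhd delta u v i j].
Proof.
case: tri => _ [_ [/(_ i j) [E|[E|[u [v [hu hv huv E]]]]] _]].
- exact: Or31.
- exact: Or32.
- by apply: Or33; exists u, v.
Qed.

Let lhd_flip u v i j : lhd delta u v i j -> lhd delta v u j i.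
Proof. by case: tri => _ [_ [_ [/(_ i j u v)]]]. Qed.

Let delta_TS u v i j : side u v ->
  delta (TS u v) i j = if (inl i == v) && (inl j == u) then TS u v else TExit.
Proof. by case: tri => _ [_ [_ [_ [+ _]]]] => /(_ u v) + [hu hv huv]; apply. Qed.

Let delta_Exit i j : delta TExit i j = TExit.
Proof. by case: tri => _ [_ [_ [_ [_ ]]]]. Qed.

Lemma side_sym u v : side u v -> side v u.
Proof. by case=> hu hv /nesym. Qed.

Lemma wf_delta s i j : wf_state s -> wf_state (delta s i j).
Proof.
case: s => [_| _|u v huv] /=.
- by case: (delta_Id_cases i j) => [->|->|[u [v [huv ->]]]].
- by rewrite delta_Exit.
- by rewrite delta_TS //; case: ifP.
Qed.

Lemma wf_itin x y k : wf_state (itin delta x y k).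
Proof. by elim: k => //= k; apply: wf_delta. Qed.

Lemma is_exit_delta s i j : is_exit s -> is_exit (delta s i j).
Proof. by case: s => //= _; rewrite delta_Exit. Qed.

Lemma delta_Id_enter i j : i <> j -> ~~ is_exit (delta TId i j) ->
  exists u v, side u v /\ lhd delta u v i j.
Proof. by case: (delta_Id_cases i j) => [/delta_IdP|->|] //. Qed.

Lemma delta_TS_alive u v i j : side u v -> ~~ is_exit (delta (TS u v) i j) ->
  [/\ delta (TS u v) i j = TS u v, inl i = v & inl j = u].
Proof.
by move=> huv; rewrite delta_TS //; case: eqP => // -> /=; case: eqP => // ->.
Qed.

Lemma delta_swap s i j : wf_state s -> delta (swap_state s) j i = swap_state (delta s i j).
Proof.
case: s => [_| _|u v huv] /=.
- case: (delta_Id_cases i j) => [/delta_IdP ij|E|[u [v [_ /lhd_flip E]]]].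
  + by subst j; have -> := proj2 (delta_IdP i i) erefl.
  + rewrite E; case: (delta_Id_cases j i) => [/delta_IdP ij|//|[u [v [_ /lhd_flip]]]].
      by rewrite ij (proj2 (delta_IdP i i)) in E.
    by rewrite /lhd E.
  + by rewrite E (lhd_flip E).
- by rewrite !delta_Exit.
- by rewrite !delta_TS //; [rewrite andbC; case: ifP | exact: side_sym].
Qed.

Lemma itin_swap x y k : itin delta y x k = swap_state (itin delta x y k).
Proof. by elim: k => //= k ->; apply/delta_swap/wf_itin. Qed.

Lemma itin_diag x k : itin delta x x k = TId.
Proof. by elim: k => //= k ->; apply/delta_IdP. Qed.

Lemma rho_diag (R : numDomainType) (xi : R) x : rho delta xi x x = 0.
Proof. by apply: rho_eq0 => k; rewrite itin_diag. Qed.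

Lemma rho_sym (R : numDomainType) (xi : R) x y : rho delta xi x y = rho delta xi y x.
Proof. by apply: eq_rho => k; rewrite itin_swap; case: itin. Qed.

Hypothesis gas : gasket_automaton delta a b c.

Lemma lhd_boundary u w i j : side u w -> u = inl j -> ~ lhd delta u w i j.
Proof.
case: gas => _ _ _ [+ + +] [hu hw huw] uj; rewrite /boundary_at.
case: hu => [->|[->|->]] in uj huw hw *; rewrite uj => B1 B2 B3;
  case: hw huw => [->|[->|->]] //= _;
  match goal with B : _ /\ _ |- _ => case: B => m1 m2 end; by [apply: m1 | apply: m2].
Qed.

Lemma lhd_gather u v w i j l : side u v -> side w u -> w <> v ->
  lhd delta u v i j -> lhd delta w u j l -> lhd delta w v i l.
Proof.
case: gas => _ _ gather _ [hu hv huv] [hw _ hwu] hwv uv_ij wu_jl.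
have gather_ab p q r : lhd delta a c p r -> lhd delta b c p q -> lhd delta a b q r.
  by case: (gather p q r).
have gather_bc p q r : lhd delta a c p r -> lhd delta a b q r -> lhd delta b c p q.
  by case: (gather p q r).
have gather_ac p q r : lhd delta b c p q -> lhd delta a b q r -> lhd delta a c p r.
  by case: (gather p q r).
have vu_ji := lhd_flip uv_ij; have uw_lj := lhd_flip wu_jl.
suff: lhd delta w v i l \/ lhd delta v w l i by case=> // /lhd_flip.
move: hu hv hw huv hwu hwv uv_ij wu_jl vu_ji uw_lj; rewrite /in_abc.
(* (u, v, w) is a permutation of (a, b, c); in each of the six cases the goal is one
   Gathering implication, up to flipping its premises or its conclusion. *)
case=> [->|[->|->]]; case=> [->|[->|->]]; case=> [->|[->|->]] => // *;
  by (left + right); first [apply: gather_ab | apply: gather_bc | apply: gather_ac];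
     eassumption.
Qed.

Lemma delta_Id_gather u v w i j l : side u v -> side w u ->
  lhd delta u v i j -> lhd delta w u j l ->
  delta TId i l = compose_state (TS u v) (TS w u).
Proof.
move=> huv hwu uv_ij wu_jl /=.
case: eqP => [wv|wv]; last exact: (lhd_gather huv hwu wv uv_ij wu_jl).
apply/delta_IdP; case: gas => _ uniq _ _.
have [hv hu vu] := side_sym huv.
by apply: (uniq v u hv hu vu j); [apply: lhd_flip | rewrite -wv].
Qed.

(* The letters [i' j' l'] of the following step only serve to show that both pairs
   expect the same label from the middle word. *)
Lemma delta_compose s1 s2 i j l i' j' l' : wf_state s1 -> wf_state s2 ->
  ~~ is_exit (delta (delta s1 i j) i' j') -> ~~ is_exit (delta (delta s2 j l) j' l') ->
  delta (compose_state s1 s2) i l = compose_state (delta s1 i j) (delta s2 j l).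
Proof.
move=> wf1 wf2 alive1 alive2.
have next_label u v w t : delta s1 i j = TS u v -> delta s2 j l = TS w t -> t = u.
  move=> E1 E2; have /= huv := wf_delta i j wf1; have /= hwt := wf_delta j l wf2.
  rewrite E1 in alive1 huv; rewrite E2 in alive2 hwt.
  have [_ _ <-] := delta_TS_alive huv alive1.
  by have [_ <- _] := delta_TS_alive hwt alive2.
move: alive1 alive2 => /(contra (@is_exit_delta _ _ _)) alive1.
move=> /(contra (@is_exit_delta _ _ _)) alive2.
have Id_refl k : delta TId k k = TId by apply/delta_IdP.
case: s1 => [| |u v] in wf1 alive1 next_label *; rewrite ?delta_Exit // in alive1;
  case: s2 => [| |w t] in wf2 alive2 next_label *; rewrite ?delta_Exit // in alive2.
- case: (eqVneq i j) => [<-|ij]; first by rewrite Id_refl.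
  case: (eqVneq j l) => [<-|jl]; first by rewrite Id_refl; case: (delta TId i j).
  have [u [v [huv uv_ij]]] := delta_Id_enter (elimN eqP ij) alive1.
  have [w [t [hwt wt_jl]]] := delta_Id_enter (elimN eqP jl) alive2.
  have tu := next_label _ _ _ _ uv_ij wt_jl; subst t.
  by rewrite uv_ij wt_jl; apply: delta_Id_gather huv hwt uv_ij wt_jl.
- have [E2 jt lw] := delta_TS_alive wf2 alive2.
  case: (eqVneq i j) => [<-|ij]; first by rewrite Id_refl.
  have [u [v [huv uv_ij]]] := delta_Id_enter (elimN eqP ij) alive1.
  have tu := next_label _ _ _ _ uv_ij E2; subst u.
  by case: (lhd_boundary huv (esym jt) uv_ij).
- have [E1 iv ju] := delta_TS_alive wf1 alive1.
  case: (eqVneq j l) => [<-|jl]; first by rewrite /= Id_refl E1.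
  have [w [t [hwt wt_jl]]] := delta_Id_enter (elimN eqP jl) alive2.
  have tu := next_label _ _ _ _ E1 wt_jl; subst t.
  by case: (lhd_boundary (side_sym hwt) (esym ju) (lhd_flip wt_jl)).
- have [E1 iv ju] := delta_TS_alive wf1 alive1.
  have [E2 jt lw] := delta_TS_alive wf2 alive2.
  rewrite E1 E2 /=; case: eqP => [wv|wv].
    by apply/delta_IdP; apply: (@inl_inj _ 'I_3); rewrite iv lw.
  have [[hu hv _] [hw _ _]] := (wf1, wf2).
  by rewrite delta_TS ?iv ?lw ?eqxx.
Qed.

Lemma itin_compose x y z k :
  ~~ is_exit (itin delta x y k.+1) -> ~~ is_exit (itin delta y z k.+1) ->
  itin delta x z k = compose_state (itin delta x y k) (itin delta y z k).
Proof.
elim: k => [//|k IH] alive_xy alive_yz.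
rewrite /= IH.
- exact: delta_compose (wf_itin _ _ _) (wf_itin _ _ _) alive_xy alive_yz.
- by apply: contra alive_xy; apply: is_exit_delta.
- by apply: contra alive_yz; apply: is_exit_delta.
Qed.

Lemma is_exit_itin_trans x y z k : is_exit (itin delta x z k) ->
  is_exit (itin delta x y k.+1) || is_exit (itin delta y z k.+1).
Proof.
move=> exit_xz; apply/contraT; rewrite negb_or => /andP[alive_xy alive_yz].
move: exit_xz; rewrite (itin_compose alive_xy alive_yz) => /compose_state_exit.
by case/orP => /is_exit_delta exit_k; [move: alive_xy | move: alive_yz]; rewrite /= exit_k.
Qed.

Lemma rho_quasi_triangle (R : numFieldType) (xi : R) x y z : 0 < xi <= 1 ->
  rho delta xi x z <= xi^-1 * (rho delta xi x y + rho delta xi y z).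
Proof.
move=> /andP[xi_gt0 xi_le1]; have xi_ge0 := ltW xi_gt0.
have rho_xy_ge0 := rho_ge0 delta x y xi_ge0; have rho_yz_ge0 := rho_ge0 delta y z xi_ge0.
have inv_ge0 : 0 <= xi^-1 by rewrite invr_ge0.
apply: rho_le => [|n /(is_exit_itin_trans y) exit_n1]; first by rewrite mulr_ge0 ?addr_ge0.
have pred_le : xi ^+ n.-1 <= xi^-1 * xi ^+ n.
  case: n {exit_n1} => [|n]; first by rewrite mulr1 invf_ge1.
  by rewrite exprS mulKf ?gt_eqF.
apply: (le_trans pred_le); apply: ler_wpM2l => //.
have xi_01 : 0 <= xi <= 1 by rewrite xi_ge0.
case/orP: exit_n1 => /(rho_ge_exit xi_01) /= le_rho; apply: (le_trans le_rho).
- by rewrite lerDl.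
- by rewrite lerDr.
Qed.

End Itineraries.

Unset Implicit Arguments. Set Strict Implicit.

Theorem theorem1p1 (N : nat)
  (delta : tstate (label N) -> 'I_N -> 'I_N -> tstate (label N))
  (a b c : label N) (R : realType) (xi : R) :
  gasket_automaton delta a b c -> 0 < xi < 1 ->
  [/\ (forall x : nat -> 'I_N, rho delta xi x x = 0),
      (forall x y : nat -> 'I_N, rho delta xi x y = rho delta xi y x) &
      exists C : R, 1 <= C /\
        forall x y z : nat -> 'I_N,
          rho delta xi x z <= C * (rho delta xi x y + rho delta xi y z)].
Proof.
move=> gas /andP[xi_gt0 xi_lt1]; have [tri _ _ _] := gas.
split=> [x|x y|]; [exact: (rho_diag tri) | exact: (rho_sym tri) |].
exists xi^-1; split; first by rewrite invf_ge1 // ltW.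
by move=> x y z; apply: (rho_quasi_triangle tri gas); rewrite xi_gt0 ltW.
Qed.
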